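(* Let $p$ be a prime, let $e\geq2$ and $d\geq2$ be integers, let $\lambda\in\{1,\dots,\min(e,d-1)\}$, and let $\alpha=(\alpha_1,\dots,\alpha_d)\in\mathcal R_\lambda(d,e)$ with $\mu=\mu(\alpha)$. Let $\mathcal P(p^e,d)\subset\mathbb R^d$ be the convex hull of all $d$-dimensional vector-factorisations of $p^e$. Then the inequality $$\sum_{i=1}^dp^{\alpha_i} x_i\geq\lambda p^{\mu+1}+(d-\lambda)p^\mu$$ holds with equality on every element of the set $$S_\alpha=\Big\{(p^{\mu-\alpha_1+\epsilon_1},\dots,p^{\mu-\alpha_d+\epsilon_d})\ :\ (\epsilon_1,\dots,\epsilon_d)\in\{0,1\}^d,\ \textstyle\sum_i\epsilon_i=\lambda\Big\},$$ which is a set of vertices of $\mathcal P(p^e,d)$. The convex hull of $S_\alpha$ is a facet of $\mathcal P(p^e,d)$ which is affinely equivalent to the $(d-1)$-dimensional hypersimplex $\Delta(\lambda)$.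
   Context: $\mathbb N=\{0,1,2,\dots\}$. A $d$-dimensional vector-factorisation of $N\geq1$ is a vector $(v_1,\dots,v_d)\in\mathbb N^d$ with $v_1\cdots v_d=N$. $\mathcal R_\lambda(d,e)$ is the set of all $\alpha\in\mathbb N^d$ with $\min(\alpha_1,\dots,\alpha_d)=0$, $\max(\alpha_1,\dots,\alpha_d)\,d<e+\sum_i\alpha_i$ and $e+\sum_i\alpha_i\equiv\lambda\pmod d$; for such $\alpha$, $\mu(\alpha)$ is the integer with $\mu(\alpha)d+\lambda=e+\sum_i\alpha_i$. $\Delta(\lambda)=\mathrm{Conv}\{\epsilon\in\{0,1\}^d:\sum_i\epsilon_i=\lambda\}$ is the hypersimplex of parameter $\lambda$. *)

From HB Require Import structures.
From mathcomp Require Import all_boot all_order all_algebra.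
From mathcomp Require Import reals.
Unset Printing Implicit Defensive.
Import Order.TTheory GRing.Theory Num.Theory.
Local Open Scope ring_scope.

Section Defs.
Variable R : realType.
Variable d : nat.

Definition pset := 'rV[R]_d -> Prop.

Definition dotv (c x : 'rV[R]_d) : R := \sum_(i < d) c 0 i * x 0 i.

Definition conv (S : pset) : pset := fun x =>
  exists n (w : 'I_n -> R) (q : 'I_n -> 'rV[R]_d),
    (forall i, S (q i)) /\ (forall i, 0 <= w i) /\
    \sum_(i < n) w i = 1 /\ x = \sum_(i < n) w i *: q i.

Definition aff_indep k (pts : 'I_k.+1 -> 'rV[R]_d) : Prop :=
  \rank (\matrix_(i < k) (pts (lift ord0 i) - pts ord0)) = k.

Definition affdim (S : pset) (k : nat) : Prop :=
  (exists pts : 'I_k.+1 -> 'rV[R]_d, (forall i, S (pts i)) /\ aff_indep k pts) /\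
  (forall pts : 'I_k.+2 -> 'rV[R]_d, (forall i, S (pts i)) -> ~ aff_indep k.+1 pts).

Definition is_face (P F : pset) : Prop :=
  exists (c : 'rV[R]_d) (b : R),
    (forall x, P x -> b <= dotv c x) /\
    (forall x, F x <-> (P x /\ dotv c x = b)).

Definition is_vertex (P : pset) (v : 'rV[R]_d) : Prop :=
  is_face P (fun x => x = v).

Definition is_facet (P F : pset) : Prop :=
  is_face P F /\ exists k, affdim P k.+1 /\ affdim F k.

Definition aff_equiv (A B : pset) : Prop :=
  exists (M : 'M[R]_d) (t : 'rV[R]_d), M \in unitmx /\
    forall x, A x <-> B (x *m M + t).

Definition factorisations (N : nat) : pset := fun x =>
  exists v : 'I_d -> nat, \prod_(i < d) v i = N /\ x = \row_i (v i)%:R.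

Definition factPolytope (N : nat) : pset := conv (factorisations N).

Definition hypersimplex (lam : nat) : pset :=
  conv (fun x => exists eps : 'I_d -> bool,
          \sum_(i < d) (eps i : nat) = lam /\ x = \row_i (eps i)%:R).

End Defs.

Definition in_Rset (lam d e : nat) (alpha : 'I_d -> nat) : Prop :=
  (exists i, alpha i = 0%N) /\
  ((\max_(i < d) alpha i) * d < e + \sum_(i < d) alpha i)%N /\
  (e + \sum_(i < d) alpha i = lam %[mod d])%N.

(* mu(alpha): mu * d + lambda = e + sum alpha *)
Definition mu_of (lam d e : nat) (alpha : 'I_d -> nat) : nat :=
  ((e + \sum_(i < d) alpha i - lam) %/ d)%N.

Definition S_alpha (R : realType) (p d mu lam : nat) (alpha : 'I_d -> nat)
  : pset R d := fun x =>
  exists eps : 'I_d -> bool, \sum_(i < d) (eps i : nat) = lam /\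
    x = \row_i ((p%:R : R) ^ ((mu%:Z - (alpha i)%:Z + (eps i : nat)%:Z)%R)).

(* Write a factorisation of [p^e] as [(p^a_1, ..., p^a_d)] with [sum_i a_i = e].
   Then [sum_i p^alpha_i x_i = sum_i p^n_i] with [n_i = alpha_i + a_i] and
   [sum_i n_i = mu d + lambda].  By convexity of [n |-> p^n], each [p^n_i] lies
   above the secant through [mu] and [mu + 1]; summing gives the inequality, with
   equality exactly when every [n_i] is [mu] or [mu + 1], i.e. on [S_alpha].
   Each point of [S_alpha] is cut out alone by a similar inequality with weights
   [p^(alpha_i + 1 - eps_i)].  The diagonal affine map
   [x_i |-> (p^(alpha_i - mu) x_i - 1) / (p - 1)] sends [S_alpha] onto the
   vertices of the hypersimplex; [d + 1] affinely independent factorisations and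
   [d] affinely independent points of [S_alpha] show that the face is a facet. *)

From HB Require Import structures.
From mathcomp Require Import all_boot all_order all_algebra perm.
From mathcomp Require Import reals.
From mathcomp Require Import ring lra zify.
Import Order.TTheory GRing.Theory Num.Theory.
Local Open Scope ring_scope.

Section ConvexHull.
Context {R : realType} {d : nat}.
Implicit Types (G H Q : pset R d) (c q x y t : 'rV[R]_d) (b : R) (M : 'M[R]_d).
Local Notation conv := (conv R d).
Local Notation dotv := (dotv R d).

Lemma dotvB c x y : dotv c (x - y) = dotv c x - dotv c y.
Proof. by rewrite /dotv -sumrB; apply: eq_bigr => i _; rewrite !mxE mulrBr. Qed.

Lemma dotv_convex c b n (w : 'I_n -> R) (q : 'I_n -> 'rV[R]_d) :
  \sum_i w i = 1 ->
  dotv c (\sum_i w i *: q i) - b = \sum_i w i * (dotv c (q i) - b).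
Proof.
move=> w1; under [RHS]eq_bigr => i _ do rewrite mulrBr.
rewrite sumrB -mulr_suml w1 mul1r; congr (_ - _); rewrite /dotv.
under eq_bigr => j _ do rewrite summxE mulr_sumr.
rewrite exchange_big /=; apply: eq_bigr => i _; rewrite mulr_sumr.
by apply: eq_bigr => j _; rewrite mxE mulrCA.
Qed.

Lemma conv_sub G H : (forall q, G q -> H q) -> forall x, conv G x -> conv H x.
Proof.
move=> GH x [n [w [q [Gq [w0 [w1 ->]]]]]].
by exists n, w, q; split => // i; apply: GH.
Qed.

Lemma conv_mem G q : G q -> conv G q.
Proof.
move=> Gq; exists 1%N, (fun _ => 1), (fun _ => q).
by rewrite !big_ord1 scale1r; do !split=> //; apply: ler01.
Qed.

Lemma conv1 x y : conv (eq^~ y) x <-> x = y.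
Proof.
split=> [[n [w [q [qy [_ [w1 ->]]]]]]|->]; last exact: conv_mem.
by under eq_bigr => i _ do rewrite qy; rewrite -scaler_suml w1 scale1r.
Qed.

Lemma conv_dotv_ge G c b :
  (forall q, G q -> b <= dotv c q) -> forall x, conv G x -> b <= dotv c x.
Proof.
move=> Gb x [n [w [q [Gq [w0 [w1 ->]]]]]].
rewrite -subr_ge0 dotv_convex //; apply: sumr_ge0 => i _.
by rewrite mulr_ge0 // subr_ge0 Gb.
Qed.

Lemma conv_dotv_eq G c b :
  (forall q, G q -> dotv c q = b) -> forall x, conv G x -> dotv c x = b.
Proof.
move=> Gb x [n [w [q [Gq [w0 [w1 ->]]]]]].
apply/eqP; rewrite -subr_eq0 dotv_convex //; apply/eqP.
by apply: big1 => i _; rewrite Gb // subrr mulr0.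
Qed.

(* A convex combination of points of [G] on the supporting hyperplane only
   uses, with nonzero weight, points of [Q]; the others can be swapped for
   any point of [Q]. *)
Lemma is_face_conv G Q c b :
  (forall q, G q -> b <= dotv c q) ->
  (forall q, Q q <-> G q /\ dotv c q = b) -> (exists q, Q q) ->
  is_face R d (conv G) (conv Q).
Proof.
move=> Gb QG [q0 Qq0]; exists c, b; split; first exact: conv_dotv_ge.
move=> x; split=> [Qx|[[n [w [q [Gq [w0 [w1 ->]]]]]] xb]].
  split; first by apply: conv_sub Qx => q /QG [].
  by apply: conv_dotv_eq Qx => q /QG [].
have tight i : w i * (dotv c (q i) - b) = 0.
  have ge0 j : 0 <= w j * (dotv c (q j) - b) by rewrite mulr_ge0 ?subr_ge0 ?Gb.
  have sum0 : \sum_j w j * (dotv c (q j) - b) = 0 by rewrite -dotv_convex // xb subrr.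
  exact: (psumr_eq0P (fun j _ => ge0 j) sum0).
exists n, w, (fun i => if w i == 0 then q0 else q i); split.
  move=> i; case: eqP => [_ //|/eqP wi0]; apply/QG; split => //.
  by apply/eqP; move/eqP: (tight i); rewrite mulf_eq0 (negbTE wi0) subr_eq0.
split => //; split => //; apply: eq_bigr => i _.
by case: eqP => // ->; rewrite !scale0r.
Qed.

Lemma is_face_ext G F F' :
  (forall x, F x <-> F' x) -> is_face R d G F -> is_face R d G F'.
Proof.
move=> FF' [c [b [Gb GF]]]; exists c, b; split => // x.
by rewrite -FF'; apply: GF.
Qed.

Lemma conv_affine G H M t :
  (forall q, G q -> H (q *m M + t)) -> forall x, conv G x -> conv H (x *m M + t).
Proof.
move=> GH x [n [w [q [Gq [w0 [w1 ->]]]]]].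
exists n, w, (fun i => q i *m M + t); split; first by move=> i; apply: GH.
split => //; split => //.
rewrite mulmx_suml -{1}[t]scale1r -w1 scaler_suml -big_split /=.
by apply: eq_bigr => i _; rewrite scalerDr scalemxAl.
Qed.

Lemma aff_equiv_conv_image G H M t : M \in unitmx ->
  (forall x, G x <-> exists2 y, H y & x = y *m M + t) ->
  aff_equiv R d (conv G) (conv H).
Proof.
move=> uM GH; set N := invmx M; set s := - (t *m N).
have inv y : (y *m M + t) *m N + s = y.
  by rewrite mulmxDl -mulmxA mulmxV // mulmx1 addrK.
have inv' x : (x *m N + s) *m M + t = x.
  by rewrite mulmxDl -mulmxA mulVmx // mulmx1 /s mulNmx -mulmxA mulVmx // mulmx1 subrK.
exists N, s; split; first by rewrite unitmx_inv.
move=> x; split.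
  by apply: conv_affine => q /GH [y Hy ->]; rewrite inv.
by move=> Hx; rewrite -[x]inv'; apply: conv_affine Hx => q Hq; apply/GH; exists q.
Qed.

End ConvexHull.

Section AffineIndependence.
Context {R : realType} {d : nat}.
Implicit Types (c t : 'rV[R]_d) (M : 'M[R]_d).

Lemma rank_upper_trig k n (A : 'M[R]_(k, n)) (B : 'M[R]_(n, k)) :
  (forall i j : 'I_k, (j < i)%N -> (A *m B) i j = 0) ->
  (forall i, (A *m B) i i != 0) -> \rank A = k.
Proof.
move=> upper diag; apply/eqP; rewrite eqn_leq rank_leq_row /=.
have uAB : A *m B \in unitmx.
  rewrite -unitmx_tr unitmxE det_trig ?unitfE; first by apply/prodf_neq0 => i _; rewrite mxE.
  by apply/is_trig_mxP => i j ij; rewrite mxE upper.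
by rewrite -{1}(mxrank_unit uAB) mxrankM_maxl.
Qed.

Definition with_base {k} (q0 : 'rV[R]_d) (f : 'I_k -> 'rV[R]_d) (i : 'I_k.+1) :=
  if unlift ord0 i is Some j then f j else q0.

Lemma aff_indep_with_base k (q0 : 'rV[R]_d) (f : 'I_k -> 'rV[R]_d) :
  \rank (\matrix_(i < k) (f i - q0)) = k -> aff_indep R d k (with_base q0 f).
Proof.
rewrite /aff_indep => rk; rewrite -[RHS]rk; congr (\rank _); apply/row_matrixP => i.
by rewrite !rowK /with_base liftK unlift_none.
Qed.

Lemma aff_indep_affine k (pts : 'I_k.+1 -> 'rV[R]_d) M t : M \in unitmx ->
  aff_indep R d k pts -> aff_indep R d k (fun i => pts i *m M + t).
Proof.
rewrite /aff_indep -row_free_unit => /mxrankMfree fM rk.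
rewrite -[RHS]rk -(fM _ (\matrix_i (pts (lift ord0 i) - pts ord0))); congr (\rank _).
by apply/row_matrixP => i; rewrite row_mul !rowK mulmxBl opprD addrACA subrr addr0.
Qed.

Lemma aff_indep_gt_dim k (pts : 'I_k.+1 -> 'rV[R]_d) :
  (d < k)%N -> ~ aff_indep R d k pts.
Proof.
rewrite /aff_indep => dk rk.
by have := rank_leq_col (\matrix_i (pts (lift ord0 i) - pts ord0)); rewrite rk leqNgt dk.
Qed.

Lemma aff_indep_hyperplane (pts : 'I_d.+1 -> 'rV[R]_d) c b :
  c != 0 -> (forall i, dotv R d c (pts i) = b) -> ~ aff_indep R d d pts.
Proof.
move=> c0 onH; rewrite /aff_indep => rk.
have Ac : \matrix_i (pts (lift ord0 i) - pts ord0) *m c^T = 0.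
  apply/matrixP => i j; rewrite !mxE (ord1 j).
  transitivity (dotv R d c (pts (lift ord0 i) - pts ord0)).
    by apply: eq_bigr => k _; rewrite !mxE mulrC.
  by rewrite dotvB !onH subrr.
have := mulmx0_rank_max Ac; rewrite mxrank_tr rk.
by rewrite -[X in (_ <= X)%N]addn0 leq_add2l leqn0 mxrank_eq0 (negbTE c0).
Qed.

End AffineIndependence.

Section PowerSums.
Context {R : realType}.
Implicit Type P : R.

Lemma expr_ge_bernoulli2 P k : 1 <= P ->
  1 + k%:R * (P - 1) + k.-1%:R * (P - 1) ^+ 2 <= P ^+ k.
Proof.
move=> P1; elim: k => [|k IH]; first by rewrite !mul0r !addr0 expr0.
case: k IH => [|k] IH; first by rewrite mul0r addr0 mul1r expr1; lra.
have P0 : 0 <= P by lra.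
rewrite exprS; apply: le_trans (ler_wpM2l P0 IH); rewrite -subr_ge0 /= -!natr1.
have -> : P * (1 + (k%:R + 1) * (P - 1) + k%:R * (P - 1) ^+ 2) -
  (1 + (k%:R + 1 + 1) * (P - 1) + (k%:R + 1) * (P - 1) ^+ 2) =
  k%:R * (P - 1) ^+ 2 + k%:R * (P - 1) ^+ 3 by ring.
by rewrite addr_ge0 // mulr_ge0 ?exprn_ge0 // subr_ge0.
Qed.

Definition secant_gap P (m b : nat) : R :=
  P ^+ b - P ^+ m - (b%:R - m%:R) * (P - 1) * P ^+ m.

Lemma secant_gap_eq0 P m b : b = m \/ b = m.+1 -> secant_gap P m b = 0.
Proof. by rewrite /secant_gap => -[] ->; rewrite ?exprS -?natr1; ring. Qed.

Lemma secant_gap_gt0 P m b : 2 <= P -> b <> m -> b <> m.+1 -> 0 < secant_gap P m b.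
Proof.
move=> P2 bm bm1; have P0 : 0 < P by lra.
have P1 : 1 <= P - 1 by lra.
case: (ltnP b m) => [lt_bm | le_mb].
  have [k ->] : exists k, m = (b + k.+1)%N by exists (m - b.+1)%N; lia.
  have -> : secant_gap P (b + k.+1) b =
      P ^+ b + (k.+1%:R * (P - 1) - 1) * P ^+ (b + k.+1).
    by rewrite /secant_gap natrD; ring.
  rewrite ltr_pwDl ?exprn_gt0 // mulr_ge0 ?exprn_ge0 ?subr_ge0 ?mulr_ege1 //.
    by rewrite ler1n.
  exact: ltW.
have [k ->] : exists k, b = (m + k.+2)%N by exists (b - m.+2)%N; lia.
have -> : secant_gap P m (m + k.+2) = P ^+ m * (P ^+ k.+2 - 1 - k.+2%:R * (P - 1)).
  by rewrite /secant_gap exprD natrD; ring.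
have /(expr_ge_bernoulli2 P k.+2) /= bern : 1 <= P by lra.
have sq_gt0 : 0 < k.+1%:R * (P - 1) ^+ 2 by rewrite mulr_gt0 ?exprn_gt0 //; lra.
by rewrite mulr_gt0 ?exprn_gt0 //; lra.
Qed.

Lemma secant_gap_ge0 P m b : 2 <= P -> 0 <= secant_gap P m b.
Proof.
move=> P2; have [->|bm] := eqVneq b m; first by rewrite secant_gap_eq0 //; left.
have [->|bm1] := eqVneq b m.+1; first by rewrite secant_gap_eq0 //; right.
by rewrite ltW // secant_gap_gt0 //; apply/eqP.
Qed.

Section SumOfPowers.
Context {P : R} {d m r : nat} {n : 'I_d -> nat}.
Hypotheses (P2 : 2 <= P) (r_le_d : (r <= d)%N) (sum_n : (\sum_i n i = m * d + r)%N).

Lemma sum_expr_sub :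
  \sum_i P ^+ n i - (r%:R * P ^+ m.+1 + (d - r)%:R * P ^+ m) =
  \sum_i secant_gap P m (n i).
Proof.
rewrite /secant_gap !sumrB -!mulr_suml sumrB !sumr_const card_ord.
rewrite -natr_sum sum_n natrD natrM natrB // exprS.
by rewrite -[P ^+ m *+ d]mulr_natr -[m%:R *+ d]mulr_natr; ring.
Qed.

Lemma sum_expr_ge : r%:R * P ^+ m.+1 + (d - r)%:R * P ^+ m <= \sum_i P ^+ n i.
Proof.
by rewrite -subr_ge0 sum_expr_sub sumr_ge0 // => i _; apply: secant_gap_ge0.
Qed.

Lemma sum_expr_eq :
  \sum_i P ^+ n i = r%:R * P ^+ m.+1 + (d - r)%:R * P ^+ m <->
  forall i, n i = m \/ n i = m.+1.
Proof.
have gap0 i : 0 <= secant_gap P m (n i) by apply: secant_gap_ge0.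
split => [sum_eq i | nm]; last first.
  by apply/eqP; rewrite -subr_eq0 sum_expr_sub; apply/eqP/big1 => i _; apply: secant_gap_eq0.
have sum0 : \sum_i secant_gap P m (n i) = 0 by rewrite -sum_expr_sub sum_eq subrr.
have [->|nim] := eqVneq (n i) m; first by left.
have [->|nim1] := eqVneq (n i) m.+1; first by right.
have := @secant_gap_gt0 P m (n i) P2 (elimN eqP nim) (elimN eqP nim1).
by rewrite (psumr_eq0P (fun j _ => gap0 j) sum0) // ltxx.
Qed.

End SumOfPowers.
End PowerSums.

Section Vertices.
Context {R : realType} {d : nat}.

Definition pvec (P : R) (a : 'I_d -> nat) : 'rV[R]_d := \row_i (P ^+ a i).

Lemma dotv_pvecl P a x : dotv R d (pvec P a) x = \sum_i P ^+ a i * x 0 i.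
Proof. by apply: eq_bigr => i _; rewrite mxE. Qed.

Lemma dotv_pvec P a b : dotv R d (pvec P a) (pvec P b) = \sum_i P ^+ (a i + b i).
Proof. by rewrite dotv_pvecl; apply: eq_bigr => i _; rewrite mxE exprD. Qed.

Lemma pvec_factorisation p e a :
  (\sum_i a i = e)%N -> factorisations R d (p ^ e) (pvec p%:R a).
Proof.
move=> sum_a; exists (fun i => p ^ a i)%N; rewrite -expn_sum sum_a.
by split => //; apply/rowP => i; rewrite !mxE natrX.
Qed.

Lemma factorisation_prime_power {p e : nat} {x : 'rV[R]_d} : prime p ->
  factorisations R d (p ^ e) x ->
  exists2 a : 'I_d -> nat, (\sum_i a i = e)%N & x = pvec p%:R a.
Proof.
move=> p_pr [v [prod_v ->]].
have v_pow i : v i = (p ^ logn p (v i))%N.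
  have : (v i %| p ^ e)%N by rewrite -prod_v (bigD1 i) //= dvdn_mulr.
  by case/(dvdn_pfactor _ _ p_pr) => m _ ->; rewrite pfactorK.
exists (fun i => logn p (v i)).
  apply: (expnI (prime_gt1 p_pr)); rewrite -prod_v expn_sum.
  by apply: eq_bigr => i _; rewrite -v_pow.
by apply/rowP => i; rewrite !mxE {1}v_pow natrX.
Qed.

Definition hypersimplex_vertices (lam : nat) : pset R d := fun x =>
  exists eps : 'I_d -> bool, (\sum_i (eps i : nat))%N = lam /\ x = \row_i (eps i)%:R.

End Vertices.

Lemma sum_ord_lt d lam : (lam <= d)%N -> (\sum_(k < d) ((k < lam)%N : nat))%N = lam.
Proof.
move=> le_lam_d; rewrite -big_mkcond /= -(big_ord_widen _ (fun _ => 1%N) le_lam_d).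
by rewrite sum1_card card_ord.
Qed.

(* The base vertex is the indicator of [0, lam) and the others are obtained by
   swapping one coordinate [b i < lam] with one coordinate [a i >= lam]; dropping
   column [lam - 1] leaves an upper triangular difference matrix. *)
Lemma hypersimplex_aff_indep (R : realType) {n lam : nat} : (0 < lam < n.+1)%N ->
  exists pts : 'I_n.+1 -> 'rV[R]_n.+1,
    (forall i, @hypersimplex_vertices R n.+1 lam (pts i)) /\ aff_indep R n.+1 n pts.
Proof.
case/andP=> lam_gt0 lam_lt.
pose in_lam (k : 'I_n.+1) := (k < lam)%N.
pose vert (s : {perm 'I_n.+1}) : 'rV[R]_n.+1 := \row_k (in_lam (s k))%:R.
have vertP s : @hypersimplex_vertices R n.+1 lam (vert s).
  exists (fun k => in_lam (s k)); split => //.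
  rewrite (reindex_inj (@perm_inj _ s^-1)) /=.
  by under eq_bigr => k _ do rewrite permKV; rewrite sum_ord_lt // ltnW.
pose b (i : 'I_n) : 'I_n.+1 := inord (if (i < lam.-1)%N then nat_of_ord i else lam.-1).
pose a (i : 'I_n) : 'I_n.+1 := inord (if (i < lam.-1)%N then lam else i.+1).
have bE i : nat_of_ord (b i) = if (i < lam.-1)%N then nat_of_ord i else lam.-1.
  by rewrite /b inordK //; have := ltn_ord i; case: ifP; lia.
have aE i : nat_of_ord (a i) = if (i < lam.-1)%N then lam else i.+1.
  by rewrite /a inordK //; have := ltn_ord i; case: ifP; lia.
have b_in i : in_lam (b i) by rewrite /in_lam bE; case: ifP; lia.
have a_out i : ~~ in_lam (a i) by rewrite /in_lam aE; case: ifP; lia.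
exists (with_base (vert 1%g) (fun i => vert (tperm (a i) (b i)))); split.
  by move=> i; rewrite /with_base; case: unlift => *; apply: vertP.
apply: aff_indep_with_base.
set A := \matrix_i _; pose L0 : 'I_n.+1 := inord lam.-1.
have L0E : nat_of_ord L0 = lam.-1 by rewrite /L0 inordK //; lia.
have A_eq0 i k : k != a i -> k != b i -> A i k = 0.
  by move=> ka kb; rewrite !mxE perm1 tpermD 1?eq_sym // subrr.
have A_neq0 i k : nat_of_ord k = a i \/ nat_of_ord k = b i -> A i k != 0.
  rewrite !mxE perm1 => -[/val_inj -> | /val_inj ->]; rewrite ?tpermL ?tpermR.
    by rewrite b_in (negbTE (a_out i)) subr0 oner_eq0.
  by rewrite b_in (negbTE (a_out i)) sub0r oppr_eq0 oner_eq0.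
apply: (@rank_upper_trig _ _ _ _ (colsub (lift L0) 1%:M : 'M_(n.+1, n))) => [i j ji | i];
  rewrite mulmx_colsub mulmx1 mxE.
  apply: A_eq0; apply/negP => /eqP/(congr1 val)/=; rewrite /bump L0E ?aE ?bE;
    by case: ifP; case: (leqP lam.-1 j) => /=; lia.
apply: A_neq0; rewrite /= /bump L0E aE bE.
by case: ifP; case: (leqP lam.-1 i) => /=; lia.
Qed.

Lemma sumr_pair {V : nmodType} {n} {F : 'I_n -> V} {j1 j2} : j1 != j2 ->
  (forall k, k != j1 -> k != j2 -> F k = 0) -> \sum_k F k = F j1 + F j2.
Proof.
move=> j12 F0; rewrite (bigD1 j1) //= (bigD1 j2) 1?eq_sym //= big1 ?addr0 //.
by move=> k /andP [k1 k2]; apply: F0.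
Qed.

(* The factorisations with [p^e] in one coordinate and [1] elsewhere all have
   the same coordinate sum, while [(p^(e-1), p, 1, ..., 1)] does not; so replacing
   column 0 of the difference matrix by its row sums makes it upper triangular. *)
Lemma factPolytope_aff_indep (R : realType) p e n : (1 < p)%N -> (2 <= e)%N ->
  exists pts : 'I_n.+3 -> 'rV[R]_n.+2,
    (forall i, factPolytope R n.+2 (p ^ e) (pts i)) /\ aff_indep R n.+2 n.+2 pts.
Proof.
move=> p_gt1 e_ge2; set P : R := p%:R.
have P1 : 1 < P by rewrite ltr1n.
have Pe1 k : 1 < P ^+ k.+1 by rewrite exprn_egt1.
pose i1 : 'I_n.+2 := lift ord0 ord0.
pose single (j k : 'I_n.+2) := if k == j then e else 0%N.
pose two (k : 'I_n.+2) := if k == ord0 then e.-1 else if k == i1 then 1%N else 0%N.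
pose f (j : 'I_n.+2) := pvec P (if j == ord0 then two else single j).
have sum_single j : (\sum_k single j k = e)%N by rewrite -big_mkcond big_pred1_eq.
have sum_two : (\sum_k two k = e)%N.
  rewrite (bigD1 ord0) // (bigD1 i1) // big1 => [|k /andP [k0 k1]].
    by rewrite /two /= addn0; lia.
  by rewrite /two (negbTE k0) (negbTE k1).
exists (with_base (pvec P (single ord0)) f); split.
  move=> i; apply: conv_mem; rewrite /with_base /f.
  by case: unlift => [j|]; [case: eqP|]; move=> *; apply: pvec_factorisation.
apply: aff_indep_with_base; set A := \matrix_j _.
pose B := \matrix_(k, j) (if j == ord0 then 1 else (k == j)%:R) : 'M[R]_n.+2.
have AB0 i : (A *m B) i ord0 = \sum_k A i k.
  by rewrite !mxE; apply: eq_bigr => k _; rewrite !mxE eqxx mulr1.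
have ABj i j : j != ord0 -> (A *m B) i j = A i j.
  move=> j0; rewrite !mxE (bigD1 j) //= !mxE (negbTE j0) eqxx mulr1 big1 ?addr0 //.
  by move=> k kj; rewrite !mxE (negbTE j0) (negbTE kj) mulr0.
have Aij i j : A i j = P ^+ (if i == ord0 then two j else single i j) - P ^+ single ord0 j.
  by rewrite !mxE; case: eqP.
apply: (@rank_upper_trig _ _ _ _ B) => [i j ji | i].
  have i0 : i != ord0 by apply: contraTneq ji => ->.
  have [-> | j0] := eqVneq j ord0.
    rewrite AB0 (sumr_pair i0) => [|k ki k0]; rewrite !Aij (negbTE i0) /single.
      by rewrite eqxx (negbTE i0) eq_sym (negbTE i0) expr0 addrC subrKA subrr.
    by rewrite (negbTE ki) (negbTE k0) subrr.
  rewrite ABj // Aij (negbTE i0) /single (negbTE j0).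
  by rewrite (_ : j == i = false) ?subrr //; apply: contraTF ji => /eqP ->; rewrite ltnn.
have [-> | i0] := eqVneq i ord0.
  rewrite AB0 (sumr_pair (_ : ord0 != i1)) // => [|k k0 k1]; rewrite !Aij /two /single eqxx.
    rewrite (negbTE (_ : i1 != ord0)) //= expr0 expr1.
    have [m em] : exists m, e = m.+2 by exists e.-2; lia.
    have -> : P ^+ e.-1 - P ^+ e + (P - 1) = (P - 1) * (1 - P ^+ m.+1).
      by rewrite em exprS; ring.
    by rewrite mulf_neq0 // subr_eq0 ?(gt_eqF P1) ?(lt_eqF (Pe1 _)).
  by rewrite (negbTE k0) (negbTE k1) subrr.
rewrite ABj // Aij (negbTE i0) /single !eqxx (negbTE i0) expr0 subr_eq0.
have [m ->] : exists m, e = m.+1 by exists e.-1; lia.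
by rewrite gt_eqF.
Qed.

Definition facet_vertex (R : realType) (p mu : nat) {d} (alpha : 'I_d -> nat)
  (eps : 'I_d -> bool) : 'rV[R]_d := pvec p%:R (fun i => mu - alpha i + eps i)%N.

Definition facet_scale (R : realType) (p mu : nat) {d} (alpha : 'I_d -> nat) : 'M[R]_d :=
  diag_mx (\row_k (p%:R ^+ (mu - alpha k) * (p%:R - 1))).

Definition facet_shift (R : realType) (p mu : nat) {d} (alpha : 'I_d -> nat) : 'rV[R]_d :=
  \row_k p%:R ^+ (mu - alpha k).

Section Facet.
Context {R : realType} {p e d lam mu : nat} {alpha : 'I_d -> nat}.
Hypotheses (p_pr : prime p) (lam_le_d : (lam <= d)%N)
  (mu_eq : (mu * d + lam = e + \sum_(i < d) alpha i)%N)
  (alpha_le_mu : forall i, (alpha i <= mu)%N).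

Local Notation P := (p%:R : R).
Local Notation S := (S_alpha R p d mu lam alpha).
Local Notation facet_level := (lam%:R * P ^+ mu.+1 + (d - lam)%:R * P ^+ mu).

Let P2 : 2 <= P. Proof. by rewrite ler_nat prime_gt1. Qed.

Local Notation facet_vertex := (facet_vertex R p mu alpha).
Local Notation facet_scale := (facet_scale R p mu alpha).
Local Notation facet_shift := (facet_shift R p mu alpha).

Lemma S_alphaE x : S x <->
  exists2 eps : 'I_d -> bool, (\sum_(i < d) (eps i : nat))%N = lam & x = facet_vertex eps.
Proof.
have expE (eps : 'I_d -> bool) i :
    P ^ (mu%:Z - (alpha i)%:Z + (eps i : nat)%:Z) = P ^+ (mu - alpha i + eps i).
  by rewrite subzn // -PoszD.
split=> [[eps [sum_eps ->]] | [eps sum_eps ->]]; exists eps => //;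
  by [apply/rowP => i; rewrite !mxE expE | split => //; apply/rowP => i; rewrite !mxE expE].
Qed.

Lemma sum_alpha_add {a : 'I_d -> nat} : (\sum_(i < d) a i = e)%N ->
  (\sum_(i < d) (alpha i + a i) = mu * d + lam)%N.
Proof. by move=> sum_a; rewrite big_split /= sum_a mu_eq addnC. Qed.

Lemma sum_facet_exponents {eps : 'I_d -> bool} : (\sum_(i < d) (eps i : nat))%N = lam ->
  (\sum_(i < d) (mu - alpha i + eps i) = e)%N.
Proof.
move=> sum_eps; apply/(@addIn (\sum_(i < d) alpha i)); rewrite addnC -big_split /=.
rewrite -mu_eq (eq_bigr (fun i => mu + eps i)%N) => [|i _]; last first.
  by have := alpha_le_mu i; lia.
by rewrite big_split sum_nat_const card_ord mulnC sum_eps.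
Qed.

Lemma facet_vertex_factorisation (eps : 'I_d -> bool) :
  (\sum_(i < d) (eps i : nat))%N = lam -> factorisations R d (p ^ e) (facet_vertex eps).
Proof. by move=> sum_eps; apply/pvec_factorisation/sum_facet_exponents. Qed.

Lemma facet_ineq x : factorisations R d (p ^ e) x -> facet_level <= dotv R d (pvec P alpha) x.
Proof.
case/(factorisation_prime_power p_pr) => a sum_a ->; rewrite dotv_pvec.
by apply: sum_expr_ge => //; apply: sum_alpha_add.
Qed.

Lemma S_alpha_facet x :
  S x <-> factorisations R d (p ^ e) x /\ dotv R d (pvec P alpha) x = facet_level.
Proof.
rewrite S_alphaE; split => [[eps sum_eps ->] | [/(factorisation_prime_power p_pr) [a sum_a ->]]].
  split; first exact: facet_vertex_factorisation.
  rewrite dotv_pvec; apply/sum_expr_eq; rewrite ?sum_alpha_add ?sum_facet_exponents // => i.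
  by have := alpha_le_mu i; case: (eps i) => /=; lia.
have sum_aa := sum_alpha_add sum_a.
rewrite dotv_pvec => /(sum_expr_eq P2 lam_le_d sum_aa) tight.
exists (fun i => alpha i + a i == mu.+1)%N.
  have : (\sum_(i < d) (alpha i + a i) = \sum_(i < d) (mu + (alpha i + a i == mu.+1 : nat)))%N.
    by apply: eq_bigr => i _; case: (tight i) => ->; rewrite ?eqxx ?(ltn_eqF (ltnSn mu)) /=; lia.
  by rewrite sum_aa big_split /= sum_nat_const card_ord mulnC; lia.
apply/rowP => i; rewrite !mxE; congr (_ ^+ _).
apply: (@addnI (alpha i)); have := alpha_le_mu i.
by case: (tight i) => ->; rewrite ?eqxx ?(ltn_eqF (ltnSn mu)) /=; lia.
Qed.

Lemma is_face_facet : is_face R d (factPolytope R d (p ^ e)) (conv R d S).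
Proof.
apply: is_face_conv facet_ineq S_alpha_facet _.
exists (facet_vertex (fun k => k < lam)%N); apply/S_alphaE; exists (fun k => k < lam)%N => //.
exact: sum_ord_lt.
Qed.

(* With weights [p^(alpha_i + 1 - eps_i)] the exponents of any factorisation
   [p^a] become [n_i = alpha_i + 1 - eps_i + a_i], summing to [(mu + 1) d]; hence
   [sum_i p^n_i >= d p^(mu + 1)], with equality only if every [n_i = mu + 1],
   i.e. only at [v] (the bound is read once with [m = mu] and once with
   [m = mu + 1]). *)
Lemma facet_vertex_is_vertex (eps : 'I_d -> bool) : (\sum_(i < d) (eps i : nat))%N = lam ->
  is_vertex R d (factPolytope R d (p ^ e)) (facet_vertex eps).
Proof.
move=> sum_eps; set v := facet_vertex eps.
pose k i := (alpha i + ~~ eps i)%N.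
have sum_k a : (\sum_(i < d) a i = e)%N -> (\sum_(i < d) (k i + a i) = mu * d + d)%N.
  move=> sum_a; rewrite big_split /= sum_a big_split /=.
  have : (\sum_(i < d) (eps i + ~~ eps i) = d)%N.
    by rewrite (eq_bigr (fun=> 1%N)) ?sum_nat_const ?card_ord ?muln1 // => i; case: (eps i).
  by rewrite big_split /= sum_eps (addnAC _ _ e) (addnC _ e) -mu_eq -addnA => ->.
have sum_k' a : (\sum_(i < d) a i = e)%N -> (\sum_(i < d) (k i + a i) = mu.+1 * d + 0)%N.
  by move/sum_k; lia.
have level m r : (m, r) = (mu, d) \/ (m, r) = (mu.+1, 0%N) ->
    r%:R * P ^+ m.+1 + (d - r)%:R * P ^+ m = d%:R * P ^+ mu.+1.
  by case=> -[-> ->]; rewrite ?subnn ?subn0 mul0r ?addr0 ?add0r.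
apply: (is_face_ext _ (conv R d (eq^~ v))) => [x|]; first exact: conv1.
apply: (is_face_conv _ _ (pvec P k) (d%:R * P ^+ mu.+1)).
- move=> _ /(factorisation_prime_power p_pr) [a /sum_k sum_a ->]; rewrite dotv_pvec.
  by rewrite -(level mu d) ?sum_expr_ge //; left.
- move=> q; split=> [-> | [/(factorisation_prime_power p_pr) [a sum_a ->]]].
    split; first exact: facet_vertex_factorisation.
    rewrite dotv_pvec -(level mu.+1 0%N); last by right.
    apply/(sum_expr_eq P2 _ (sum_k' _ (sum_facet_exponents sum_eps))) => // i.
    by left; rewrite /k; have := alpha_le_mu i; case: (eps i) => /=; lia.
  rewrite dotv_pvec => tight.
  have /(sum_expr_eq P2 (leqnn d) (sum_k _ sum_a)) low : \sum_i P ^+ (k i + a i) =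
      d%:R * P ^+ mu.+1 + (d - d)%:R * P ^+ mu by rewrite subnn mul0r addr0.
  have /(sum_expr_eq P2 (leq0n d) (sum_k' _ sum_a)) high : \sum_i P ^+ (k i + a i) =
      0%:R * P ^+ mu.+2 + (d - 0)%:R * P ^+ mu.+1 by rewrite mul0r add0r subn0.
  apply/rowP => i; rewrite !mxE; congr (_ ^+ _).
  by have := low i; have := high i; have := alpha_le_mu i; rewrite /k; case: (eps i) => /=; lia.
- by exists v.
Qed.

Lemma facet_scale_unit : facet_scale \in unitmx.
Proof.
have P1 : P - 1 != 0 by apply: lt0r_neq0; rewrite subr_gt0; apply: lt_le_trans P2; rewrite ltr1n.
have P0 : P != 0 by rewrite pnatr_eq0 -lt0n prime_gt0.
rewrite unitmxE det_diag unitfE; apply/prodf_neq0 => k _.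
by rewrite mxE mulf_neq0 ?expf_neq0.
Qed.

Lemma S_alpha_image x : S x <->
  exists2 y, hypersimplex_vertices lam y & x = y *m facet_scale + facet_shift.
Proof.
have shift_vertex (eps : 'I_d -> bool) :
    facet_vertex eps = \row_k (eps k)%:R *m facet_scale + facet_shift.
  apply/rowP => k; rewrite mul_mx_diag !mxE exprD.
  by case: (eps k); rewrite /= ?expr1 ?expr0; ring.
rewrite S_alphaE; split=> [[eps sum_eps ->] | [_ [eps [sum_eps ->]] ->]].
  by exists (\row_k (eps k)%:R) => //; exists eps.
by exists eps.
Qed.

Lemma aff_equiv_facet_hypersimplex :
  aff_equiv R d (conv R d S) (hypersimplex R d lam).
Proof. exact: aff_equiv_conv_image facet_scale_unit S_alpha_image. Qed.

End Facet.

Lemma affdim_factPolytope (R : realType) p e n : (1 < p)%N -> (2 <= e)%N ->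
  affdim R n.+2 (factPolytope R n.+2 (p ^ e)) n.+2.
Proof.
move=> p_gt1 e_ge2; split; first exact: factPolytope_aff_indep.
by move=> pts _; apply: aff_indep_gt_dim.
Qed.

Lemma affdim_facet (R : realType) p e n lam mu (alpha : 'I_n.+2 -> nat) :
  prime p -> (0 < lam < n.+2)%N ->
  (mu * n.+2 + lam = e + \sum_(i < n.+2) alpha i)%N -> (forall i, alpha i <= mu)%N ->
  affdim R n.+2 (conv R n.+2 (S_alpha R p n.+2 mu lam alpha)) n.+1.
Proof.
move=> p_pr lam_bd mu_eq alpha_le_mu.
have lam_le : (lam <= n.+2)%N by case/andP: lam_bd => _ /ltnW.
split.
  have [pts [pts_vert pts_indep]] := hypersimplex_aff_indep R lam_bd.
  exists (fun i => pts i *m facet_scale R p mu alpha + facet_shift R p mu alpha); split.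
    by move=> i; apply/conv_mem/S_alpha_image => //; exists (pts i).
  exact/aff_indep_affine/pts_indep/facet_scale_unit.
move=> pts pts_S; apply: (aff_indep_hyperplane _ (pvec p%:R alpha)).
  apply/eqP => /matrixP /(_ 0 ord0); rewrite !mxE => /eqP.
  by rewrite expf_eq0 pnatr_eq0 (gtn_eqF (prime_gt0 p_pr)) andbF.
move=> i; move: (pts_S i); apply: conv_dotv_eq => q.
by case/(S_alpha_facet p_pr lam_le mu_eq alpha_le_mu) => _ ->.
Qed.

Lemma in_Rset_mu {lam d e : nat} {alpha : 'I_d -> nat} : (lam < d)%N -> in_Rset lam d e alpha ->
  let mu := mu_of lam d e alpha in
  (mu * d + lam = e + \sum_(i < d) alpha i)%N /\ forall i, (alpha i <= mu)%N.
Proof.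
move=> lam_lt [_ [max_lt sum_mod]] mu.
have d_gt0 : (0 < d)%N by apply: leq_ltn_trans lam_lt.
set T := (e + \sum_(i < d) alpha i)%N in max_lt sum_mod mu *.
have T_eq : T = (T %/ d * d + lam)%N by rewrite {1}(divn_eq T d) sum_mod modn_small.
have mu_eq : mu = (T %/ d)%N by rewrite /mu /mu_of -/T {1}T_eq addnK mulnK.
rewrite mu_eq -T_eq; split => // i.
rewrite -ltnS -(ltn_pmul2r d_gt0).
apply: leq_ltn_trans (_ : alpha i * d <= (\max_(j < d) alpha j) * d)%N _.
  by rewrite leq_mul2r (leq_bigmax i) orbT.
by apply: ltn_trans max_lt _; rewrite {1}T_eq mulSn; lia.
Qed.

Theorem corollary3p4 (R : realType) (p e d lam : nat) (alpha : 'I_d -> nat) :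
  prime p -> (2 <= e)%N -> (2 <= d)%N -> (1 <= lam)%N -> (lam <= minn e d.-1)%N ->
  in_Rset lam d e alpha ->
  let mu := mu_of lam d e alpha in
  let P := factPolytope R d (p ^ e) in
  let S := S_alpha R p d mu lam alpha in
  (forall x, P x ->
     lam%:R * (p%:R ^+ mu.+1) + (d - lam)%N%:R * (p%:R ^+ mu)
       <= \sum_(i < d) (p%:R ^+ alpha i) * x 0 i) /\
  (forall x, S x ->
     \sum_(i < d) (p%:R ^+ alpha i) * x 0 i
       = lam%:R * (p%:R ^+ mu.+1) + (d - lam)%N%:R * (p%:R ^+ mu)) /\
  (forall x, S x -> is_vertex R d P x) /\
  is_facet R d P (conv R d S) /\
  aff_equiv R d (conv R d S) (hypersimplex R d lam).
Proof.
move=> p_pr e_ge2; case: d alpha => [|[|n]] // alpha _ lam_gt0.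
rewrite leq_min => /andP [_ lam_lt] alpha_R mu P S.
have {}lam_lt : (lam < n.+2)%N by [].
have lam_bd : (0 < lam < n.+2)%N by rewrite lam_gt0.
have [mu_eq alpha_le_mu] := in_Rset_mu lam_lt alpha_R.
have lam_le_d : (lam <= n.+2)%N by apply: ltnW.
split; [|split; [|split; [|split]]].
- move=> x Px; rewrite -dotv_pvecl; move: Px; apply: conv_dotv_ge.
  exact: facet_ineq p_pr lam_le_d mu_eq.
- by move=> x /(S_alpha_facet p_pr lam_le_d mu_eq alpha_le_mu) [_ <-]; rewrite dotv_pvecl.
- move=> x /(S_alphaE alpha_le_mu) [eps sum_eps ->].
  exact: facet_vertex_is_vertex p_pr lam_le_d mu_eq alpha_le_mu eps sum_eps.
- split; first exact: is_face_facet p_pr lam_le_d mu_eq alpha_le_mu.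
  exists n.+1; split; first exact/affdim_factPolytope/e_ge2/prime_gt1.
  exact: affdim_facet p_pr lam_bd mu_eq alpha_le_mu.
- exact: aff_equiv_facet_hypersimplex p_pr alpha_le_mu.
Qed.
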